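(* Let $\mathscr T\colon\mathbb{IDA}\to\mathbb{IM}$ send each involutive generalized dynamic algebra $\mathfrak K$ to the involutive submonoid $\mathscr T(K)$ of $(K,\odot,{}^*,e)$ generated by $\widetilde K$ (the smallest subset containing $\widetilde K$ and $e$ and closed under $\odot$ and ${}^*$), and each morphism $f$ to its restriction. Then: (1) for every IDA $\mathfrak K$, $\widetilde K\subseteq\mathscr T(K)\subseteq K$ and $\mathscr T(\mathfrak K)$ is an involutive submonoid of $(K,\odot,{}^*,e)$; (2) if $\mathfrak K$ is a semi-Foulis dynamic algebra such that for all $s,t\in\mathscr T(K)$, $s=t$ iff $s\equiv t$, then $\nu_{\mathfrak K}\colon\mathscr T(\mathfrak K)\to\mathscr T(\mathbf{Lin}(\widetilde{\mathfrak K}))$, $\nu_{\mathfrak K}(k)=k\bullet(-)$, is a well-defined isomorphism of involutive monoids, and its restriction to $\widetilde K$ is an order-preserving bijection from $(\widetilde K,\preceq)$ onto the test set $\{\pi_u\mid u\in\widetilde K\}$ of $\mathbf{Lin}(\widetilde{\mathfrak K})$ ordered by $p\le q\iff p=q\circ p$; (3) for every complete orthomodular lattice $\mathcal M$, $\mu_{\mathcal M}\colon\mathscr T(\mathbf{Lin}(\mathcal M))\to\mathscr T(\mathscr P(\mathscr T(\mathbf{Lin}(\mathcal M))))$, $\mu_{\mathcal M}(f)=\{f\}$, is an isomorphism in $\mathbb{IM}$; (4) for every morphism $f\colon\mathfrak K_1\to\mathfrak K_2$ in $\mathbb{IDA}$, $f(\mathscr T(K_1))\subseteq\mathscr T(K_2)$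 and $\mathscr T(f)=f|_{\mathscr T(K_1)}$.
   Context: An involutive unital quantale is $(Q,\bigsqcup,\odot,{}^*,e)$: complete join-semilattice $Q$, associative $\odot$ distributing over arbitrary joins in each argument, unit $e$, ${}^*$ with $x^{**}=x$, $(x\odot y)^*=y^*\odot x^*$, $(\bigsqcup x_i)^*=\bigsqcup x_i^*$. An involutive generalized dynamic algebra (IDA) is such a quantale with ${\sim}\colon K\to K$ satisfying, for all $x,y$ and families $(x_i)$: ${\sim}(x\odot{\sim}{\sim}y)={\sim}(x\odot y)$; ${\sim}(\bigsqcup{\sim}{\sim}x_i)={\sim}(\bigsqcup x_i)$; $({\sim}x)^*={\sim}x$; ${\sim}{\sim}({\sim}{\sim}x\odot y)={\sim}({\sim}x\sqcup{\sim}({\sim}x\sqcup y))$. Test set $\widetilde K=\{{\sim}k\mid k\in K\}$; $\bigvee W={\sim}{\sim}\bigsqcup W$ for $W\subseteq\widetilde K$; $w^\perp={\sim}w$; $k\preceq l$ iff $\bigvee\{k,l\}=l$; $k\bullet v={\sim}{\sim}(k\odot v)$ for $k\in K,v\in\widetilde K$; $k\equiv l$ iff $k\bullet w=l\bullet w$ for all $w\in\widetilde K$. IDA morphisms preserve arbitrary joins, $\odot$, ${}^*$, unit, ${\sim}$ (category $\mathbb{IDA}$); $\mathfrak K$ is semi-Foulis if $(\widetilde K,\preceq,{}^\perp)$ is a complete orthomodular lattice. $\mathbb{IM}$ is the category of involutive monoids $(M,\cdot,e,{}^* )$ with homomorphisms preserving product, unit, involution. For a complete orthomodular lattice $\mathcal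 M$: Sasaki projection $\pi_m(x)=m\wedge(m^\perp\vee x)$; a map $f$ is linear if there is $f^*$ with $f(x)\le y^\perp\iff x\le f^*(y)^\perp$ for all $x,y$; $\mathbf{Lin}(\mathcal M)$ (linear maps with pointwise joins, composition, ${}^*$, unit $\mathrm{id}$) is an IDA with ${\sim}f=\pi_{f(1)^\perp}$; its test set is $\{\pi_m\mid m\in M\}$ and $\pi_m^*=\pi_m$. For an involutive submonoid $L$ of $\mathbf{Lin}(\mathcal M)$ containing all $\pi_m$, $\mathscr P(L)$ is the IDA of all subsets of $L$ with union, $A\odot B=\{a\circ b\}$, $A^*=\{a^*\}$, unit $\{\mathrm{id}_M\}$, ${\sim}A=\{\pi_{(\bigvee_{a\in A}a(1))^\perp}\}$. *)

From Stdlib Require Import ClassicalEpsilon.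

Definition image {A B : Type} (f : A -> B) (S : A -> Prop) : B -> Prop :=
  fun b => exists a, S a /\ b = f a.
Definition pair_set {A : Type} (a b : A) : A -> Prop := fun z => z = a \/ z = b.

Definition partial_order {A : Type} (le : A -> A -> Prop) : Prop :=
  (forall x, le x x) /\ (forall x y, le x y -> le y x -> x = y) /\
  (forall x y z, le x y -> le y z -> le x z).

Definition is_lub {A : Type} (le : A -> A -> Prop) (S : A -> Prop) (s : A) : Prop :=
  (forall x, S x -> le x s) /\ (forall u, (forall x, S x -> le x u) -> le s u).

Inductive gen {A : Type} (mul : A -> A -> A) (star : A -> A) (e : A)
    (G : A -> Prop) : A -> Prop :=
  | gen_base x : G x -> gen mul star e G x
  | gen_unit : gen mul star e G e
  | gen_mul x y : gen mul star e G x -> gen mul star e G y -> gen mul star e G (mul x y)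
  | gen_star x : gen mul star e G x -> gen mul star e G (star x).

Definition IM_hom {A B : Type} (mulA : A -> A -> A) (starA : A -> A) (eA : A)
    (SA : A -> Prop) (mulB : B -> B -> B) (starB : B -> B) (eB : B)
    (SB : B -> Prop) (phi : A -> B) : Prop :=
  (forall x, SA x -> SB (phi x)) /\
  (forall x y, SA x -> SA y -> phi (mulA x y) = mulB (phi x) (phi y)) /\
  phi eA = eB /\
  (forall x, SA x -> phi (starA x) = starB (phi x)).

Definition IM_iso {A B : Type} (mulA : A -> A -> A) (starA : A -> A) (eA : A)
    (SA : A -> Prop) (mulB : B -> B -> B) (starB : B -> B) (eB : B)
    (SB : B -> Prop) (phi : A -> B) : Prop :=
  IM_hom mulA starA eA SA mulB starB eB SB phi /\
  (forall x y, SA x -> SA y -> phi x = phi y -> x = y) /\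
  (forall y, SB y -> exists x, SA x /\ phi x = y).

Record IDA := {
  ida_car :> Type;
  ida_le : ida_car -> ida_car -> Prop;
  ida_join : (ida_car -> Prop) -> ida_car;
  ida_mul : ida_car -> ida_car -> ida_car;
  ida_star : ida_car -> ida_car;
  ida_e : ida_car;
  ida_sim : ida_car -> ida_car;
  ida_le_po : partial_order ida_le;
  ida_join_lub : forall S, is_lub ida_le S (ida_join S);
  ida_mulA : forall x y z, ida_mul x (ida_mul y z) = ida_mul (ida_mul x y) z;
  ida_mul1l : forall x, ida_mul ida_e x = x;
  ida_mul1r : forall x, ida_mul x ida_e = x;
  ida_mul_joinl : forall x S, ida_mul x (ida_join S) = ida_join (image (ida_mul x) S);
  ida_mul_joinr : forall S y,
      ida_mul (ida_join S) y = ida_join (image (fun s => ida_mul s y) S);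
  ida_starK : forall x, ida_star (ida_star x) = x;
  ida_star_mul : forall x y, ida_star (ida_mul x y) = ida_mul (ida_star y) (ida_star x);
  ida_star_join : forall S, ida_star (ida_join S) = ida_join (image ida_star S);
  ida_sim_mul : forall x y,
      ida_sim (ida_mul x (ida_sim (ida_sim y))) = ida_sim (ida_mul x y);
  ida_sim_join : forall S,
      ida_sim (ida_join (image (fun x => ida_sim (ida_sim x)) S)) = ida_sim (ida_join S);
  ida_star_sim : forall x, ida_star (ida_sim x) = ida_sim x;
  ida_sim_dyn : forall x y,
      ida_sim (ida_sim (ida_mul (ida_sim (ida_sim x)) y)) =
      ida_sim (ida_join (pair_set (ida_sim x)
                 (ida_sim (ida_join (pair_set (ida_sim x) y)))))
}.

Set Implicit Arguments.
Unset Strict Implicit.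

Section IDAdefs.
Variable K : IDA.
Definition tests (k : K) : Prop := exists l, k = ida_sim K l.
Definition bigvee (W : K -> Prop) : K := ida_sim K (ida_sim K (ida_join K W)).
Definition prec (k l : K) : Prop := bigvee (pair_set k l) = l.
Definition bullet (k v : K) : K := ida_sim K (ida_sim K (ida_mul K k v)).
Definition equivK (k l : K) : Prop := forall w, tests w -> bullet k w = bullet l w.
Definition T : K -> Prop := gen (ida_mul K) (ida_star K) (ida_e K) tests.
End IDAdefs.
Arguments T : clear implicits.

Definition is_IDA_mor (K1 K2 : IDA) (f : K1 -> K2) : Prop :=
  (forall S, f (ida_join K1 S) = ida_join K2 (image f S)) /\
  (forall x y, f (ida_mul K1 x y) = ida_mul K2 (f x) (f y)) /\
  (forall x, f (ida_star K1 x) = ida_star K2 (f x)) /\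
  f (ida_e K1) = ida_e K2 /\
  (forall x, f (ida_sim K1 x) = ida_sim K2 (f x)).

Section OML.
Variables (M : Type) (le : M -> M -> Prop) (compl : M -> M) (sup : (M -> Prop) -> M).

Definition top : M := sup (fun _ => True).
Definition bot : M := sup (fun _ => False).
Definition joinb (a b : M) : M := sup (pair_set a b).
Definition meetb (a b : M) : M := sup (fun z => le z a /\ le z b).

Definition is_cOML : Prop :=
  partial_order le /\
  (forall S, is_lub le S (sup S)) /\
  (forall x, compl (compl x) = x) /\
  (forall x y, le x y -> le (compl y) (compl x)) /\
  (forall x, joinb x (compl x) = top) /\
  (forall x, meetb x (compl x) = bot) /\
  (forall x y, le x y -> y = joinb x (meetb y (compl x))).

Definition sasaki (m : M) : M -> M := fun x => meetb m (joinb (compl m) x).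

Definition is_adjoint (f g : M -> M) : Prop :=
  forall x y, le (f x) (compl y) <-> le x (compl (g y)).
Definition linear (f : M -> M) : Prop := exists g, is_adjoint f g.
(* the adjoint f^* (unique for linear f) *)
Definition adj (f : M -> M) : M -> M :=
  epsilon (inhabits (fun x : M => x)) (fun g => is_adjoint f g).

Definition comp (f g : M -> M) : M -> M := fun x => f (g x).

Definition Lin_tests (f : M -> M) : Prop := exists m, f = sasaki m.
Definition T_Lin : (M -> M) -> Prop := gen comp adj (fun x : M => x) Lin_tests.
Definition Lin_le (p q : M -> M) : Prop := p = comp q p.

Definition P_mul (A B : (M -> M) -> Prop) : (M -> M) -> Prop :=
  fun h => exists a b, A a /\ B b /\ h = comp a b.
Definition P_star (A : (M -> M) -> Prop) : (M -> M) -> Prop := image adj A.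
Definition P_unit : (M -> M) -> Prop := fun h => h = (fun x : M => x).
Definition P_sim (A : (M -> M) -> Prop) : (M -> M) -> Prop :=
  fun h => h = sasaki (compl (sup (fun z => exists a, A a /\ z = a top))).
Definition P_tests (L : (M -> M) -> Prop) (X : (M -> M) -> Prop) : Prop :=
  exists A, (forall a, A a -> L a) /\ X = P_sim A.
Definition T_P (L : (M -> M) -> Prop) : ((M -> M) -> Prop) -> Prop :=
  gen P_mul P_star P_unit (P_tests L).
End OML.

Definition TK (K : IDA) : Type := {w : K | tests w}.
Definition sim_tests (K : IDA) (k : K) : tests (ida_sim K k) := ex_intro _ k eq_refl.
Definition TK_le (K : IDA) (a b : TK K) : Prop := prec (proj1_sig a) (proj1_sig b).
Definition TK_compl (K : IDA) (a : TK K) : TK K :=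
  exist _ (ida_sim K (proj1_sig a)) (sim_tests (proj1_sig a)).
Definition nu (K : IDA) (k : K) : TK K -> TK K :=
  fun v => exist _ (bullet k (proj1_sig v))
             (sim_tests (ida_sim K (ida_mul K k (proj1_sig v)))).

From Stdlib Require Import ClassicalEpsilon FunctionalExtensionality PropExtensionality ProofIrrelevance.
Set Implicit Arguments.
Unset Strict Implicit.

(* The heart of (2) is that, for a test k, the map nu k = k . (-) is the Sasaki
   projection onto k in the orthomodular lattice of tests: this is exactly the
   last axiom of an IDA, ~~(~~k (.) v) = ~(~k \/ ~(~k \/ v)).  Sasaki projections
   are self-adjoint and nu is multiplicative, so nu is a homomorphism of
   involutive monoids that sends the generators of T(K) onto those of
   T(Lin(K~)); the hypothesis s = t <-> s == t is precisely injectivity.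
   In (3), ~ of any set of linear maps is a singleton Sasaki projection, so
   f |-> {f} identifies the two generated monoids; (1) and (4) are closure
   properties of generated submonoids. *)

Definition singleton {A : Type} (a : A) : A -> Prop := fun z => z = a.

Lemma pred_ext {A : Type} (P Q : A -> Prop) : (forall x, P x <-> Q x) -> P = Q.
Proof.
  intros h; apply functional_extensionality; intro x.
  apply propositional_extensionality; auto.
Qed.

Lemma image_pair_set {A B : Type} (f : A -> B) a b :
  image f (pair_set a b) = pair_set (f a) (f b).
Proof.
  apply pred_ext; intro z; unfold image, pair_set; split.
  - intros [w [[-> | ->] ->]]; auto.
  - intros [-> | ->]; eauto.
Qed.

Lemma singleton_inj {A : Type} (a b : A) : singleton a = singleton b -> a = b.
Proof. intros h; change (singleton b a); rewrite <- h; reflexivity. Qed.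

Section Generated.
Variables (A B : Type).
Variables (mulA : A -> A -> A) (starA : A -> A) (eA : A) (GA : A -> Prop).
Variables (mulB : B -> B -> B) (starB : B -> B) (eB : B) (GB : B -> Prop).
Variable phi : A -> B.
Local Notation SA := (gen mulA starA eA GA).
Local Notation SB := (gen mulB starB eB GB).
Hypothesis phi_mul : forall x y, SA x -> SA y -> phi (mulA x y) = mulB (phi x) (phi y).
Hypothesis phi_unit : phi eA = eB.
Hypothesis phi_star : forall x, SA x -> phi (starA x) = starB (phi x).

Lemma gen_hom :
  (forall x, GA x -> SB (phi x)) -> IM_hom mulA starA eA SA mulB starB eB SB phi.
Proof.
  intros phi_gen; repeat split; auto.
  intros x Hx; induction Hx as [x Gx| |x y Hx IHx Hy IHy|x Hx IHx].
  - auto.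
  - rewrite phi_unit; apply gen_unit.
  - rewrite phi_mul by assumption; apply gen_mul; assumption.
  - rewrite phi_star by assumption; apply gen_star; assumption.
Qed.

Lemma gen_onto :
  (forall y, GB y -> exists x, SA x /\ phi x = y) ->
  forall y, SB y -> exists x, SA x /\ phi x = y.
Proof.
  intros hit y Hy.
  induction Hy as [y Gy| |y z _ [x [Hx <-]] _ [x' [Hx' <-]]|y _ [x [Hx <-]]].
  - auto.
  - exists eA; split; [apply gen_unit | exact phi_unit].
  - exists (mulA x x'); split; [apply gen_mul; assumption | apply phi_mul; assumption].
  - exists (starA x); split; [apply gen_star; assumption | apply phi_star; assumption].
Qed.

Lemma gen_iso :
  (forall x, GA x -> SB (phi x)) ->
  (forall x y, SA x -> SA y -> phi x = phi y -> x = y) ->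
  (forall y, GB y -> exists x, SA x /\ phi x = y) ->
  IM_iso mulA starA eA SA mulB starB eB SB phi.
Proof.
  intros phi_gen phi_inj hit.
  split; [apply gen_hom | split; [| apply gen_onto]]; assumption.
Qed.
End Generated.

Definition complete_lattice {M : Type} (le : M -> M -> Prop) (sup : (M -> Prop) -> M) :=
  partial_order le /\ forall S, is_lub le S (sup S).

Section CompleteLattice.
Variables (M : Type) (le : M -> M -> Prop) (sup : (M -> Prop) -> M).
Hypothesis HL : complete_lattice le sup.
Local Notation join := (joinb sup).
Local Notation meet := (meetb le sup).

Lemma le_refl x : le x x. Proof. apply HL. Qed.
Lemma le_anti x y : le x y -> le y x -> x = y. Proof. apply HL. Qed.
Lemma le_trans x y z : le x y -> le y z -> le x z. Proof. apply HL. Qed.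
Lemma sup_ub S x : S x -> le x (sup S). Proof. apply HL. Qed.
Lemma sup_least S u : (forall x, S x -> le x u) -> le (sup S) u. Proof. apply HL. Qed.

Lemma le_top x : le x (top sup). Proof. apply sup_ub; exact I. Qed.

Lemma sup_singleton c : sup (singleton c) = c.
Proof.
  apply le_anti; [apply sup_least; intros x ->; apply le_refl | apply sup_ub; reflexivity].
Qed.

Lemma join_l a b : le a (join a b). Proof. apply sup_ub; left; reflexivity. Qed.
Lemma join_r a b : le b (join a b). Proof. apply sup_ub; right; reflexivity. Qed.

Lemma join_least a b u : le a u -> le b u -> le (join a b) u.
Proof. intros; apply sup_least; intros x [-> | ->]; assumption. Qed.

Lemma join_unique a b j :
  le a j -> le b j -> (forall u, le a u -> le b u -> le j u) -> join a b = j.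
Proof.
  intros; apply le_anti; [apply join_least | apply H1; [apply join_l | apply join_r]]; auto.
Qed.

Lemma join_mono a b c d : le a c -> le b d -> le (join a b) (join c d).
Proof.
  intros; apply join_least;
    [eapply le_trans; [eassumption | apply join_l] | eapply le_trans; [eassumption | apply join_r]].
Qed.

Lemma join_comm a b : join a b = join b a.
Proof. apply le_anti; apply join_least; auto using join_l, join_r. Qed.

Lemma le_join_eq a b : le a b -> join a b = b.
Proof. intros; apply join_unique; auto using le_refl. Qed.

Lemma join_distr_r a b u : join (join a b) u = join (join a u) (join b u).
Proof.
  apply join_unique.
  - apply join_mono; apply join_l.
  - eapply le_trans; [apply join_r | apply join_r].
  - intros v habv huv.
    apply join_least; apply join_least; try exact huv;
      (eapply le_trans; [| exact habv]); [apply join_l | apply join_r].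
Qed.

Lemma meet_l a b : le (meet a b) a. Proof. apply sup_least; intros x [h _]; exact h. Qed.
Lemma meet_r a b : le (meet a b) b. Proof. apply sup_least; intros x [_ h]; exact h. Qed.
Lemma meet_greatest a b z : le z a -> le z b -> le z (meet a b).
Proof. intros; apply sup_ub; split; assumption. Qed.

Lemma meet_mono a b c d : le a c -> le b d -> le (meet a b) (meet c d).
Proof.
  intros; apply meet_greatest;
    [eapply le_trans; [apply meet_l | eassumption] | eapply le_trans; [apply meet_r | eassumption]].
Qed.

Lemma meet_comm a b : meet a b = meet b a.
Proof. apply le_anti; apply meet_greatest; auto using meet_l, meet_r. Qed.
End CompleteLattice.

Lemma cOML_complete_lattice (M : Type) (le : M -> M -> Prop) (compl : M -> M)
  (sup : (M -> Prop) -> M) : is_cOML le compl sup -> complete_lattice le sup.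
Proof. intros H; split; apply H. Qed.

Section Orthomodular.
Variables (M : Type) (le : M -> M -> Prop) (compl : M -> M) (sup : (M -> Prop) -> M).
Hypothesis H : is_cOML le compl sup.
Let HL := cOML_complete_lattice H.
Local Notation join := (joinb sup).
Local Notation meet := (meetb le sup).
Local Notation pi := (sasaki le compl sup).

Lemma complK x : compl (compl x) = x. Proof. apply H. Qed.
Lemma compl_anti x y : le x y -> le (compl y) (compl x). Proof. apply H. Qed.

Lemma orthomodular x y : le x y -> y = join x (meet y (compl x)). Proof. apply H. Qed.

Lemma le_compl_sym a b : le a (compl b) -> le b (compl a).
Proof. intros h; rewrite <- (complK b); apply compl_anti; exact h. Qed.

Lemma compl_le_sym a b : le (compl a) b -> le (compl b) a.
Proof. intros h; rewrite <- (complK a); apply compl_anti; exact h. Qed.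

Lemma meet_compl_join a b : meet a b = compl (join (compl a) (compl b)).
Proof.
  apply (le_anti HL).
  - apply le_compl_sym, (join_least HL); apply compl_anti; [apply (meet_l HL) | apply (meet_r HL)].
  - apply (meet_greatest HL); apply compl_le_sym; [apply (join_l HL) | apply (join_r HL)].
Qed.

Lemma compl_meet a b : compl (meet a b) = join (compl a) (compl b).
Proof. rewrite meet_compl_join, complK; reflexivity. Qed.

Lemma sasaki_le a x : le (pi a x) a. Proof. apply (meet_l HL). Qed.

(* Orthomodularity applied to [compl a <= compl x], read through De Morgan. *)
Lemma sasaki_id a x : le x a -> pi a x = x.
Proof.
  intros hxa; apply compl_anti, orthomodular in hxa; rewrite complK in hxa.
  unfold sasaki; rewrite <- (complK x) at 2; rewrite hxa.
  rewrite (meet_compl_join (compl x) a), !complK, (join_comm HL (compl a)), (meet_comm HL a).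
  rewrite (meet_compl_join (join x (compl a)) a), (join_comm HL (compl (join x (compl a)))).
  reflexivity.
Qed.

Lemma sasaki_top a : pi a (top sup) = a.
Proof.
  apply (le_anti HL); [apply sasaki_le |].
  apply (meet_greatest HL); [apply (le_refl HL) |].
  eapply (le_trans HL); [apply (le_top HL) | apply (join_r HL)].
Qed.

Lemma join_compl_sasaki a x : join (compl a) (pi a x) = join (compl a) x.
Proof.
  pose proof (orthomodular (join_l HL (compl a) x)) as h.
  rewrite complK, (meet_comm HL) in h; symmetry; exact h.
Qed.

Lemma sasaki_le_iff a x b : le (pi a x) b <-> le x (join (compl a) (meet a b)).
Proof.
  split; intros h.
  - eapply (le_trans HL); [apply (join_r HL (compl a)) |].
    rewrite <- join_compl_sasaki.
    apply (join_mono HL); [apply (le_refl HL) | apply (meet_greatest HL); [apply sasaki_le | exact h]].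
  - eapply (le_trans HL) with (y := meet a (join (compl a) (meet a b))).
    + apply (meet_mono HL); [apply (le_refl HL) |].
      apply (join_least HL); [apply (join_l HL) | exact h].
    + change (le (pi a (meet a b)) b).
      rewrite (sasaki_id (meet_l HL a b)); apply (meet_r HL).
Qed.

Lemma sasaki_self_adjoint a : is_adjoint le compl (pi a) (pi a).
Proof.
  intros x y; rewrite sasaki_le_iff; unfold sasaki.
  rewrite compl_meet, (meet_compl_join a (compl y)), complK; tauto.
Qed.

Lemma Lin_le_sasaki a b : le a b -> Lin_le (pi a) (pi b).
Proof.
  intros hab; apply functional_extensionality; intro x; unfold comp.
  symmetry; apply sasaki_id; eapply (le_trans HL); [apply sasaki_le | exact hab].
Qed.

Lemma is_adjoint_sym f g : is_adjoint le compl f g -> is_adjoint le compl g f.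
Proof. intros h x y; split; intros hxy; apply le_compl_sym, h, le_compl_sym, hxy. Qed.

Lemma adj_eq f g : is_adjoint le compl f g -> adj le compl f = g.
Proof.
  intros h; unfold adj.
  assert (g_spec := epsilon_spec (inhabits (fun x : M => x)) _ (ex_intro _ g h)).
  set (g' := epsilon _ _) in *; clearbody g'.
  apply functional_extensionality; intro y.
  rewrite <- (complK (g' y)), <- (complK (g y)); f_equal.
  apply (le_anti HL); [apply h, g_spec | apply g_spec, h]; apply (le_refl HL).
Qed.
End Orthomodular.

Lemma is_adjoint_id (M : Type) (le : M -> M -> Prop) (compl : M -> M) :
  is_adjoint le compl (fun x => x) (fun x => x).
Proof. intros x y; tauto. Qed.

Lemma is_adjoint_comp (M : Type) (le : M -> M -> Prop) (compl : M -> M) (f g f' g' : M -> M) :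
  is_adjoint le compl f g -> is_adjoint le compl f' g' ->
  is_adjoint le compl (comp f f') (comp g' g).
Proof. intros h h' x y; unfold comp; rewrite (h (f' x) y), (h' x (g y)); tauto. Qed.

Section IDATheory.
Variable K : IDA.
Local Notation sim := (ida_sim K).
Local Notation join := (joinb (ida_join K)).

Lemma ida_complete_lattice : complete_lattice (ida_le K) (ida_join K).
Proof. split; [apply ida_le_po | apply ida_join_lub]. Qed.
Let HLK := ida_complete_lattice.

Lemma ida_star_e : ida_star K (ida_e K) = ida_e K.
Proof.
  transitivity (ida_mul K (ida_star K (ida_e K)) (ida_star K (ida_star K (ida_e K)))).
  - rewrite ida_starK, ida_mul1r; reflexivity.
  - rewrite <- ida_star_mul, ida_mul1r, ida_starK; reflexivity.
Qed.

Lemma sim_sim_sim x : sim (sim (sim x)) = sim x.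
Proof. pose proof (ida_sim_mul K (ida_e K) x) as h; rewrite !ida_mul1l in h; exact h. Qed.

Lemma sim_sim_test a : tests a -> sim (sim a) = a.
Proof. intros [l ->]; apply sim_sim_sim. Qed.

Lemma sim_join_sim_sim x y : sim (join x (sim (sim y))) = sim (join x y).
Proof.
  assert (E : forall u v, sim (join u v) = sim (join (sim (sim u)) (sim (sim v)))).
  { intros u v; unfold joinb; rewrite <- ida_sim_join, image_pair_set; reflexivity. }
  rewrite E, sim_sim_sim, <- E; reflexivity.
Qed.

Lemma sim_sim_sim_join x y : sim (join (sim (sim x)) y) = sim (join x y).
Proof. rewrite (join_comm HLK), sim_join_sim_sim, (join_comm HLK); reflexivity. Qed.

Lemma prec_def a c : prec a c = (sim (sim (join a c)) = c).
Proof. reflexivity. Qed.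

Lemma TK_val_inj (a b : TK K) : proj1_sig a = proj1_sig b -> a = b.
Proof. destruct a, b; simpl; intros ->; f_equal; apply proof_irrelevance. Qed.

Lemma nu_mul x y : nu (ida_mul K x y) = comp (nu x) (nu y).
Proof.
  apply functional_extensionality; intro v; apply TK_val_inj; simpl; unfold bullet.
  rewrite ida_sim_mul, ida_mulA; reflexivity.
Qed.

Lemma nu_e : nu (ida_e K) = fun v => v.
Proof.
  apply functional_extensionality; intro v; apply TK_val_inj; simpl; unfold bullet.
  rewrite ida_mul1l; apply sim_sim_test, proj2_sig.
Qed.

Lemma equivK_nu (s t : K) : nu s = nu t -> equivK s t.
Proof. intros h w Hw; exact (f_equal (fun g => proj1_sig (g (exist _ w Hw))) h). Qed.

Variable sup : (TK K -> Prop) -> TK K.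
Hypothesis HO : is_cOML (@TK_le K) (@TK_compl K) sup.
Let HL := cOML_complete_lattice HO.

Lemma TK_join (a b : TK K) :
  joinb sup a b = exist _ (sim (sim (join (proj1_sig a) (proj1_sig b)))) (sim_tests _).
Proof.
  destruct a as [a Ha], b as [b Hb].
  apply (join_unique HL); unfold TK_le; simpl; rewrite ?prec_def.
  - rewrite sim_join_sim_sim, (le_join_eq HLK (join_l HLK a b)); reflexivity.
  - rewrite sim_join_sim_sim, (le_join_eq HLK (join_r HLK a b)); reflexivity.
  - intros [u Hu]; simpl; rewrite !prec_def; intros hau hbu.
    rewrite sim_sim_sim_join, (join_distr_r HLK), <- (sim_sim_sim_join (join a u)).
    rewrite <- (sim_join_sim_sim (sim (sim (join a u))) (join b u)), hau, hbu.
    rewrite (le_join_eq HLK (le_refl HLK u)); apply sim_sim_test, Hu.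
Qed.

Lemma nu_sasaki k (Hk : tests k) :
  nu k = sasaki (@TK_le K) (@TK_compl K) sup (exist _ k Hk).
Proof.
  apply functional_extensionality; intro v; apply TK_val_inj; unfold sasaki.
  rewrite (meet_compl_join HO), !TK_join; simpl; unfold bullet.
  rewrite !sim_sim_sim; unfold joinb.
  rewrite <- (ida_sim_dyn K k (proj1_sig v)), (sim_sim_test Hk); reflexivity.
Qed.

Lemma nu_onto_tests p :
  Lin_tests (@TK_le K) (@TK_compl K) sup p -> exists k : K, tests k /\ nu k = p.
Proof. intros [[k Hk] ->]; exists k; split; [exact Hk | apply nu_sasaki]. Qed.

Lemma nu_adjoint x : T K x -> is_adjoint (@TK_le K) (@TK_compl K) (nu x) (nu (ida_star K x)).
Proof.
  intros Hx; induction Hx as [x [l ->]| |x y _ IHx _ IHy|x _ IHx].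
  - rewrite ida_star_sim, (nu_sasaki (sim_tests l)); apply (sasaki_self_adjoint HO).
  - rewrite ida_star_e, nu_e; apply is_adjoint_id.
  - rewrite ida_star_mul, !nu_mul; apply is_adjoint_comp; assumption.
  - rewrite ida_starK; apply (is_adjoint_sym HO), IHx.
Qed.

Lemma nu_star x : T K x -> nu (ida_star K x) = adj (@TK_le K) (@TK_compl K) (nu x).
Proof. intros Hx; symmetry; apply (adj_eq HO), nu_adjoint, Hx. Qed.

Lemma nu_iso :
  (forall s t : K, T K s -> T K t -> (s = t <-> equivK s t)) ->
  IM_iso (ida_mul K) (ida_star K) (ida_e K) (T K)
         (@comp (TK K)) (adj (@TK_le K) (@TK_compl K)) (fun x : TK K => x)
         (T_Lin (@TK_le K) (@TK_compl K) sup) (@nu K).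
Proof.
  intros sep; apply gen_iso.
  - intros x y _ _; apply nu_mul.
  - exact nu_e.
  - exact nu_star.
  - intros k Hk; apply gen_base; exists (exist _ k Hk); apply nu_sasaki.
  - intros s t Hs Ht h; apply sep, equivK_nu; assumption.
  - intros p Hp; destruct (nu_onto_tests Hp) as [k [Hk <-]].
    exists k; split; [apply gen_base, Hk | reflexivity].
Qed.
End IDATheory.

Section PowersetOfLin.
Variables (M : Type) (le : M -> M -> Prop) (compl : M -> M) (sup : (M -> Prop) -> M).

Lemma P_mul_singleton (f g : M -> M) : P_mul (singleton f) (singleton g) = singleton (comp f g).
Proof.
  apply pred_ext; intro h; unfold P_mul, singleton; split.
  - intros [a [b [-> [-> ->]]]]; reflexivity.
  - intros ->; eauto 6.
Qed.

Lemma P_star_singleton (f : M -> M) : P_star le compl (singleton f) = singleton (adj le compl f).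
Proof.
  apply pred_ext; intro h; unfold P_star, image, singleton; split.
  - intros [a [-> ->]]; reflexivity.
  - intros ->; eauto.
Qed.

Hypothesis H : is_cOML le compl sup.
Let HL := cOML_complete_lattice H.

Lemma P_sim_singleton (f : M -> M) :
  P_sim le compl sup (singleton f) = singleton (sasaki le compl sup (compl (f (top sup)))).
Proof.
  assert (E : (fun z => exists a, singleton f a /\ z = a (top sup)) = singleton (f (top sup))).
  { apply pred_ext; intro z; unfold singleton; split.
    - intros [a [-> ->]]; reflexivity.
    - intros ->; eauto. }
  unfold P_sim; rewrite E, (sup_singleton HL); reflexivity.
Qed.

Lemma singleton_iso :
  IM_iso (@comp M) (adj le compl) (fun x : M => x) (T_Lin le compl sup)
         (@P_mul M) (P_star le compl) (@P_unit M)
         (T_P le compl sup (T_Lin le compl sup)) singleton.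
Proof.
  apply gen_iso.
  - intros f g _ _; symmetry; apply P_mul_singleton.
  - reflexivity.
  - intros f _; symmetry; apply P_star_singleton.
  - intros f [m ->]; apply gen_base.
    exists (singleton (sasaki le compl sup (compl m))); split.
    + intros a ->; apply gen_base; exists (compl m); reflexivity.
    + rewrite P_sim_singleton, (sasaki_top H), !(complK H); reflexivity.
  - intros f g _ _; apply singleton_inj.
  - intros X [A [_ ->]]; eexists; split; [apply gen_base; eexists; reflexivity | reflexivity].
Qed.
End PowersetOfLin.

Lemma IDA_mor_hom (K1 K2 : IDA) (f : K1 -> K2) :
  is_IDA_mor f ->
  IM_hom (ida_mul K1) (ida_star K1) (ida_e K1) (T K1)
         (ida_mul K2) (ida_star K2) (ida_e K2) (T K2) f.
Proof.
  intros [_ [fmul [fstar [fe fsim]]]]; apply gen_hom; auto.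
  intros x [l ->]; apply gen_base; rewrite fsim; apply sim_tests.
Qed.

Theorem proposition4p9 :
  (* (1) *)
  (forall K : IDA,
     (forall k : K, tests k -> T K k) /\
     T K (ida_e K) /\
     (forall x y : K, T K x -> T K y -> T K (ida_mul K x y)) /\
     (forall x : K, T K x -> T K (ida_star K x))) /\
  (* (2) *)
  (forall (K : IDA) (sup : (TK K -> Prop) -> TK K),
     is_cOML (@TK_le K) (@TK_compl K) sup ->
     (forall s t : K, T K s -> T K t -> (s = t <-> equivK s t)) ->
     IM_iso (ida_mul K) (ida_star K) (ida_e K) (T K)
            (@comp (TK K)) (adj (@TK_le K) (@TK_compl K)) (fun x : TK K => x)
            (T_Lin (@TK_le K) (@TK_compl K) sup) (@nu K) /\
     (forall k l : K, tests k -> tests l -> prec k l ->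
        Lin_le (nu k) (nu l)) /\
     (forall k : K, tests k -> Lin_tests (@TK_le K) (@TK_compl K) sup (nu k)) /\
     (forall k l : K, tests k -> tests l -> nu k = nu l -> k = l) /\
     (forall p, Lin_tests (@TK_le K) (@TK_compl K) sup p ->
        exists k : K, tests k /\ nu k = p)) /\
  (* (3) *)
  (forall (M : Type) (le : M -> M -> Prop) (compl : M -> M) (sup : (M -> Prop) -> M),
     is_cOML le compl sup ->
     IM_iso (@comp M) (adj le compl) (fun x : M => x) (T_Lin le compl sup)
            (@P_mul M) (P_star le compl) (@P_unit M)
            (T_P le compl sup (T_Lin le compl sup))
            (fun f : M -> M => fun g : M -> M => g = f)) /\
  (* (4) *)
  (forall (K1 K2 : IDA) (f : K1 -> K2),
     is_IDA_mor f ->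
     (forall x : K1, T K1 x -> T K2 (f x)) /\
     IM_hom (ida_mul K1) (ida_star K1) (ida_e K1) (T K1)
            (ida_mul K2) (ida_star K2) (ida_e K2) (T K2) f).
Proof.
  split; [| split; [| split]].
  - intros K; repeat split; intros;
      [apply gen_base | apply gen_unit | apply gen_mul | apply gen_star]; assumption.
  - intros K sup HO sep.
    destruct (nu_iso HO sep) as [_ [nu_inj _]].
    split; [exact (nu_iso HO sep) | split; [| split; [| split]]].
    + intros k l Hk Hl hkl; rewrite (nu_sasaki HO Hk), (nu_sasaki HO Hl).
      apply (Lin_le_sasaki HO); exact hkl.
    + intros k Hk; exists (exist _ k Hk); apply (nu_sasaki HO).
    + intros k l Hk Hl; apply nu_inj; apply gen_base; assumption.
    + exact (nu_onto_tests HO).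
  - intros M le compl sup HO; exact (singleton_iso HO).
  - intros K1 K2 f Hf; split; [apply (IDA_mor_hom Hf) | exact (IDA_mor_hom Hf)].
Qed.
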